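(* For $k\geq2$ and $d\geq3$, $R_{d,\dots,d}(W_d^{\otimes k})\leq 2^{k-1}kd$, where $W_d^{\otimes k}\in S^d\mathbb{C}^2\otimes\cdots\otimes S^d\mathbb{C}^2$ ($k$ factors).
   Context: Identify $S^d\mathbb{C}^2$ with binary forms of degree $d$ in a basis $\{x,y\}$; $W_d=x^{d-1}y$. The partially symmetric rank $R_{d_1,\dots,d_k}(T)$ is the minimal $r$ such that $T=\sum_{i=1}^r v_{i,1}^{\otimes d_1}\otimes\cdots\otimes v_{i,k}^{\otimes d_k}$ with $v_{i,j}\in\mathbb{C}^2$. *)

From mathcomp Require Import all_boot all_algebra.
From mathcomp Require Import complex Rstruct.
From Stdlib Require Import ClassicalEpsilon.
Set Implicit Arguments. Unset Strict Implicit. Unset Printing Implicit Defensive.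
Import GRing.Theory.
Local Open Scope ring_scope.

Definition C : fieldType := complex Rdefinitions.R.

(* An element of S^d C^2 (x) ... (x) S^d C^2 (k factors), viewed inside
   (C^2)^{(x) kd}: its coordinates in the basis {x = 0, y = 1} of C^2,
   indexed by idx j l = basis index in slot l of the j-th factor. *)
Definition ps_tensor (k d : nat) := ('I_k -> 'I_d -> 'I_2) -> C.

Definition ps_rank_one (k d : nat) (v : 'I_k -> 'I_2 -> C) : ps_tensor k d :=
  fun idx => \prod_(j < k) \prod_(l < d) v j (idx j l).

Definition ps_decomp (k d : nat) (T : ps_tensor k d) (r : nat) : Prop :=
  exists v : 'I_r -> 'I_k -> 'I_2 -> C,
    forall idx, T idx = \sum_(i < r) ps_rank_one (v i) idx.

Definition ps_decompb (k d : nat) (T : ps_tensor k d) (r : nat) : bool :=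
  if excluded_middle_informative (ps_decomp T r) then true else false.

Lemma ps_decompb_ex (k d : nat) (T : ps_tensor k d) :
  (exists r, ps_decomp T r) -> exists r, ps_decompb T r.
Proof.
move=> [r Hr]; exists r; rewrite /ps_decompb.
by case: excluded_middle_informative.
Qed.

Definition ps_rank (k d : nat) (T : ps_tensor k d) : nat :=
  match excluded_middle_informative (exists r, ps_decomp T r) with
  | left H => ex_minn (ps_decompb_ex H)
  | right _ => 0%N
  end.

(* W_d = x^{d-1} y in S^d C^2, as a symmetric tensor: the symmetrization
   (1/d) * sum over positions of x (x) ... (x) y (x) ... (x) x. *)
Definition W (d : nat) : ('I_d -> 'I_2) -> C :=
  fun s => if #|[set l | (s l : nat) == 1%N]| == 1%N then (d%:R)^-1 else 0.

Definition W_pow (k d : nat) : ps_tensor k d :=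
  fun idx => \prod_(j < k) W (idx j).
Arguments W_pow k d : clear implicits.

From mathcomp Require Import all_boot all_algebra all_field.
From mathcomp Require Import complex Rstruct cyclic ring zify.
From Stdlib Require Import ClassicalEpsilon.
Set Implicit Arguments.
Unset Strict Implicit.
Unset Printing Implicit Defensive.

Import GRing.Theory Num.Theory.
Local Open Scope ring_scope.

(* Let N = kd and let w be a primitive N-th root of unity. For i < N and signs
   e in {1,-1}^k with e_1 = 1, take v_j = c (x + e_j w^i y) for j = 1 and
   v_j = x + e_j w^i y otherwise, where c^d = w^(-ik) e_1...e_k / (N 2^(k-1) d^k).
   The coefficient of the monomial with y-degrees m_1, ..., m_k in the sum of
   these 2^(k-1) N tensors is a character sum, proportional to
     (sum_i w^(i (m_1 + ... + m_k - k))) * prod_(j >= 2) (1 - (-1)^(m_j)),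
   which vanishes unless m_1 + ... + m_k = k (mod N) and m_2, ..., m_k are odd.
   Since 0 <= m_1 + ... + m_k <= N, this forces every m_j = 1, which is exactly
   the support of W_d^(x)k, and the choice of c makes the coefficient there d^-k. *)

Lemma ps_rank_le k d (T : ps_tensor k d) r : ps_decomp T r -> (ps_rank T <= r)%N.
Proof.
move=> decT; rewrite /ps_rank.
case: excluded_middle_informative => [exT|[]]; last by exists r.
case: ex_minnP => m _; apply; rewrite /ps_decompb.
by case: excluded_middle_informative.
Qed.

Lemma ps_decomp_card k d (T : ps_tensor k d) (X : finType)
    (v : X -> 'I_k -> 'I_2 -> C) :
  (forall idx, T idx = \sum_(t : X) ps_rank_one (v t) idx) -> ps_decomp T #|X|.
Proof.
move=> defT; exists (fun i => v (enum_val i)) => idx; rewrite defT.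
rewrite (eq_bigl (fun t => t \in X)) //.
exact: (big_enum_val (A := mem X) (fun t => ps_rank_one (v t) idx)).
Qed.

Lemma closed_field_prim_root (F : closedFieldType) n :
  n%:R != 0 :> F -> {z : F | n.-primitive_root z}.
Proof.
move=> n_neq0; have n_gt0 : (0 < n)%N by rewrite lt0n; apply: contraNneq n_neq0 => ->.
have [r] := closed_field_poly_normal ('X^n - 1 : {poly F}).
rewrite (monicP (monicXnsubC 1 n_gt0)) scale1r => defXn1.
have unity_r : all n.-unity_root r.
  by apply/allP => z; rewrite -root_prod_XsubC -defXn1.
have size_r : (n < (size r).+1)%N.
  by rewrite -(size_prod_XsubC r id) -defXn1 size_XnsubC.
apply/sigW; have [|z _] := hasP (has_prim_root n_gt0 unity_r _ size_r); last by exists z.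
by rewrite -separable_prod_XsubC -defXn1 separable_Xn_sub_1.
Qed.

Lemma sum_prim_root_expr (R : idomainType) n (z : R) m :
  n.-primitive_root z ->
  \sum_(i < n) (z ^+ m) ^+ i = if (n %| m)%N then n%:R else 0.
Proof.
move=> z_prim; rewrite (prim_order_dvd z_prim).
have [/eqP zm1 | zm_neq1] := ifP.
  by under eq_bigr do rewrite zm1 expr1n; rewrite sumr_const card_ord.
have : (z ^+ m - 1) * \sum_(i < n) (z ^+ m) ^+ i = 0.
  by rewrite -subrX1 exprAC (prim_expr_order z_prim) expr1n subrr.
by move/eqP; rewrite mulf_eq0 subr_eq0 zm_neq1 => /eqP.
Qed.

Lemma sum_ffun_sign_prod (R : comPzRingType) (I : finType) (n : I -> nat) :
  \sum_(e : {ffun I -> bool}) \prod_i ((-1) ^+ e i) ^+ n i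
    = \prod_i (1 + (-1) ^+ n i) :> R.
Proof.
transitivity (\prod_i \sum_(b : bool) ((-1) ^+ b) ^+ n i : R).
  by rewrite bigA_distr_bigA.
by apply: eq_bigr => i _; rewrite big_bool /= expr1 expr0 expr1n addrC.
Qed.

Lemma odd_sum_eq_card (I : finType) (j0 : I) (m : I -> nat) :
  (forall j, j != j0 -> odd (m j)) -> (\sum_j m j)%N = #|I| ->
  forall j, m j = 1%N.
Proof.
move=> m_odd; rewrite (bigD1 j0) //=.
have -> : (\sum_(j | j != j0) m j = #|predC1 j0| + (\sum_(j | j != j0) (m j)./2) * 2)%N.
  rewrite bigop.big_distrl -sum1_card -big_split /=.
  by apply: eq_bigr => j /m_odd odd_mj; rewrite muln2 -{1}(odd_double_half (m j)) odd_mj.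
rewrite cardC1 -subn1; set c := #|I| => sum_m.
have c_gt0 : (0 < c)%N by apply/card_gt0P; exists j0.
have half_sum0 : (\sum_(j | j != j0) (m j)./2 = 0)%N by lia.
have mj0 : m j0 = 1%N by lia.
move/eqP: half_sum0; rewrite sum_nat_eq0 => /forall_inP half0 j.
have [-> // | /[dup] /m_odd odd_mj /half0 /eqP] := eqVneq j j0.
by rewrite -{2}(odd_double_half (m j)) odd_mj => ->.
Qed.

Lemma eq_of_dvdn_addBn n a m :
  (0 < a < n)%N -> (m <= n)%N -> (n %| m + (n - a))%N -> m = a.
Proof. by move=> /andP [a_gt0 a_lt_n] m_le_n /dvdnP [[|[|q]] eq_q]; nia. Qed.

Definition ydeg d (s : 'I_d -> 'I_2) : nat := #|[set l | (s l : nat) == 1%N]|.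

Lemma ydeg_le d (s : 'I_d -> 'I_2) : (ydeg s <= d)%N.
Proof. by rewrite -[X in (_ <= X)%N](card_ord d) max_card. Qed.

Lemma W_ydeg d (s : 'I_d -> 'I_2) : W s = if ydeg s == 1%N then d%:R^-1 else 0.
Proof. by []. Qed.

Lemma ps_rank_one_affine k d (c u : 'I_k -> C) (idx : 'I_k -> 'I_d -> 'I_2) :
  ps_rank_one (fun j b => c j * (if (b : nat) == 1%N then u j else 1)) idx
    = \prod_j (c j ^+ d * u j ^+ ydeg (idx j)) :> C.
Proof.
apply: eq_bigr => j _; rewrite big_split /= (prodr_const _ (c j)) cardT size_enum_ord.
rewrite /ydeg cardsE -prodr_const; congr (_ * _); rewrite [RHS]big_mkcond.
by apply: eq_bigr.
Qed.

Lemma sum_ydeg_le k d (idx : 'I_k -> 'I_d -> 'I_2) :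
  (\sum_j ydeg (idx j) <= k * d)%N.
Proof.
rewrite -[X in (_ <= X * _)%N](card_ord k) -sum_nat_const.
by apply: leq_sum => j _; apply: ydeg_le.
Qed.

Section WDecomposition.

Variables (k d : nat) (w : C).
Hypotheses (d_gt1 : (1 < d)%N) (w_prim : (k.+1 * d).-primitive_root w).
Local Notation N := (k.+1 * d)%N.

Definition sign (e : {ffun 'I_k -> bool}) (j : 'I_k.+1) : C :=
  (-1) ^+ (if unlift ord0 j is Some j' then e j' else false).

Definition scale : C := (N * 2 ^ k * d ^ k.+1)%:R^-1.

Definition phase (t : 'I_N * {ffun 'I_k -> bool}) : C :=
  d.-root (scale * w ^+ (t.1 * (N - k.+1)) * \prod_j sign t.2 j).

Definition wvec t (j : 'I_k.+1) (b : 'I_2) : C :=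
  (if j == ord0 then phase t else 1) *
  (if (b : nat) == 1%N then sign t.2 j * w ^+ t.1 else 1).

Lemma ps_rank_one_wvec t (idx : 'I_k.+1 -> 'I_d -> 'I_2) :
  ps_rank_one (wvec t) idx =
  scale * (w ^+ (\sum_j ydeg (idx j) + (N - k.+1))) ^+ t.1 *
  \prod_j sign t.2 j ^+ (ydeg (idx j)).+1 :> C.
Proof.
rewrite (ps_rank_one_affine (fun j => if j == ord0 then phase t else 1)
                            (fun j => sign t.2 j * w ^+ t.1)).
rewrite big_split /= big_ord_recl eqxx big1 => [|j _]; last first.
  by rewrite eq_sym (negbTE (neq_lift _ _)) expr1n.
rewrite mulr1 rootCK ?(ltnW d_gt1) //.
have prod_u : \prod_j (sign t.2 j * w ^+ t.1) ^+ ydeg (idx j)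
    = \prod_j sign t.2 j ^+ ydeg (idx j) * w ^+ (t.1 * \sum_j ydeg (idx j)).
  by under eq_bigr do rewrite exprMn; rewrite big_split /= prodrXr exprM.
have prod_S : \prod_j sign t.2 j ^+ (ydeg (idx j)).+1
    = \prod_j sign t.2 j * \prod_j sign t.2 j ^+ ydeg (idx j).
  by under eq_bigr do rewrite exprS; rewrite big_split.
rewrite prod_u prod_S -exprM mulnDl exprD !(mulnC t.1).
ring.
Qed.

Lemma sum_sign_prod (n : 'I_k.+1 -> nat) :
  \sum_e \prod_j sign e j ^+ n j = \prod_(j < k) (1 + (-1) ^+ n (lift ord0 j)).
Proof.
rewrite -sum_ffun_sign_prod; apply: eq_bigr => e _.
rewrite big_ord_recl /sign unlift_none expr0 expr1n mul1r.
by apply: eq_bigr => j _; rewrite liftK.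
Qed.

Lemma sum_ps_rank_one_wvec (idx : 'I_k.+1 -> 'I_d -> 'I_2) :
  \sum_t ps_rank_one (wvec t) idx =
  scale * (if (N %| \sum_j ydeg (idx j) + (N - k.+1))%N then N%:R else 0) *
  \prod_(j < k) (1 + (-1) ^+ (ydeg (idx (lift ord0 j))).+1) :> C.
Proof.
rewrite -(sum_prim_root_expr _ w_prim).
rewrite -(sum_sign_prod (fun j => (ydeg (idx j)).+1)).
rewrite [scale * _]mulr_sumr mulr_suml.
under [RHS]eq_bigr do rewrite mulr_sumr.
by rewrite pair_big; apply: eq_bigr => t _; rewrite ps_rank_one_wvec.
Qed.

Lemma scale_normalization : scale * N%:R * 2 ^+ k = d%:R^-1 ^+ k.+1 :> C.
Proof.
have d_neq0 : d%:R != 0 :> C by rewrite pnatr_eq0 -lt0n ltnW.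
have : 2 ^+ k != 0 :> C by rewrite expf_neq0 ?pnatr_eq0.
have : d%:R ^+ k.+1 != 0 :> C by rewrite expf_neq0.
rewrite /scale !natrM !natrX exprVn.
set dk := d%:R ^+ k.+1; set tk := 2 ^+ k => dk_neq0 tk_neq0.
by field; rewrite dk_neq0 tk_neq0 d_neq0 addrC natr1 pnatr_eq0.
Qed.

Lemma ydeg_eq1 (idx : 'I_k.+1 -> 'I_d -> 'I_2) :
  (N %| \sum_j ydeg (idx j) + (N - k.+1))%N ->
  (forall j, odd (ydeg (idx (lift ord0 j)))) -> forall j, ydeg (idx j) = 1%N.
Proof.
move=> dvd_N odd_lift.
have sum_k : (\sum_j ydeg (idx j) = k.+1)%N.
  apply: eq_of_dvdn_addBn dvd_N; last exact: sum_ydeg_le.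
  by rewrite ltn_Pmulr.
apply: (@odd_sum_eq_card _ ord0 (fun j => ydeg (idx j))); last first.
  by rewrite sum_k card_ord.
by move=> j; have [j' ->|->] := unliftP ord0 j; rewrite ?eqxx.
Qed.

Lemma W_pow_sum_wvec (idx : 'I_k.+1 -> 'I_d -> 'I_2) :
  W_pow k.+1 d idx = \sum_t ps_rank_one (wvec t) idx.
Proof.
rewrite sum_ps_rank_one_wvec /W_pow (eq_bigr _ (fun j _ => W_ydeg (idx j))).
have [all1 | /forallPn [j /negbTE ydeg_j]] := boolP [forall j, ydeg (idx j) == 1%N].
  have ydeg1 j : ydeg (idx j) = 1%N by apply/eqP/(forallP all1).
  have -> : (\sum_j ydeg (idx j) = k.+1)%N.
    by rewrite (eq_bigr (fun=> 1%N)) ?sum1_card ?card_ord.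
  rewrite subnKC ?leq_pmulr ?(ltnW d_gt1) // dvdnn.
  rewrite [in RHS](eq_bigr (fun=> 2%:R)) => [|j _]; last by rewrite ydeg1 sqrrN expr1n.
  rewrite (eq_bigr (fun=> d%:R^-1)) => [|j _]; last by rewrite ydeg1.
  by rewrite !prodr_const !card_ord scale_normalization.
rewrite (bigD1 j) //= ydeg_j mul0r.
case: ifP => [dvd_N | _]; last by rewrite mulr0 mul0r.
have /forallPn [j' even_j'] : ~~ [forall j', odd (ydeg (idx (lift ord0 j')))].
  apply: contra (negbT ydeg_j) => /forallP odd_lift.
  by rewrite (ydeg_eq1 dvd_N odd_lift).
rewrite [X in _ * X](bigD1 j') //= -signr_odd /= (negbTE even_j') expr1 addrN.
by rewrite mul0r mulr0.
Qed.

End WDecomposition.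

Theorem corollary3p7 (k d : nat) :
  (2 <= k)%N -> (3 <= d)%N -> (ps_rank (W_pow k d) <= 2 ^ (k - 1) * k * d)%N.
Proof.
case: k => [//|k] _ d_gt2; have d_gt1 : (1 < d)%N := ltnW d_gt2.
have N_neq0 : (k.+1 * d)%:R != 0 :> C.
  by rewrite pnatr_eq0 muln_eq0 negb_or /= -lt0n (ltnW d_gt1).
have [w w_prim] := closed_field_prim_root N_neq0.
have decW := ps_decomp_card (W_pow_sum_wvec d_gt1 w_prim).
apply: leq_trans (ps_rank_le decW) _.
by rewrite card_prod card_ord card_ffun card_bool card_ord subn1 mulnC mulnA.
Qed.
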